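(* Let $m\ge 1$, $\varphi_0>0$ and $\varphi_1\ge 0$. For $\mathbf{g}\in\mathbb{R}^m$ define $$\hat T(\mathbf{g}) = \varphi_0\big(\max(\mathbf{g})-\min(\mathbf{g})\big)^2+\varphi_1\big(\max(\mathbf{g})-\min(\mathbf{g})\big).$$ Then: (i) $\hat T$ is a convex function on $\mathbb{R}^m$. (ii) Its Legendre–Fenchel conjugate $\hat T^*(\boldsymbol\lambda)=\sup_{\mathbf{g}\in\mathbb{R}^m}\big(\mathbf{g}\cdot\boldsymbol\lambda-\hat T(\mathbf{g})\big)$ is given, for every $\boldsymbol\lambda\in\mathbb{R}^m$, by $$\hat T^*(\boldsymbol\lambda)=\begin{cases} s(\|\boldsymbol\lambda\|_1/2) & \text{if } \sum_c\lambda_c=0,\\ +\infty & \text{otherwise,}\end{cases}\qquad s(x)=\begin{cases}\frac{(x-\varphi_1)^2}{4\varphi_0} & x\ge\varphi_1,\\ 0 & x<\varphi_1.\end{cases}$$ (iii) For every $\mathbf{g}\in\mathbb{R}^m$, $\hat T(\mathbf{g})=\hat T^{**}(\mathbf{g})=\sup_{\boldsymbol\lambda\in\mathbb{R}^m}\big(\mathbf{g}\cdot\boldsymbol\lambda-\hat T^*(\boldsymbol\lambda)\big)$.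
   Context: $\max(\mathbf{g})$ and $\min(\mathbf{g})$ denote the largest and smallest components of the vector $\mathbf{g}$, and $\|\cdot\|_1$ is the $\ell_1$ norm. *)

From HB Require Import structures.
From mathcomp Require Import all_boot all_order all_algebra.
From mathcomp Require Import all_classical all_reals all_analysis.
Set Implicit Arguments. Unset Strict Implicit. Unset Printing Implicit Defensive.
Import Order.TTheory GRing.Theory Num.Theory.
Local Open Scope ring_scope.

Section Defs.
Variable R : realType.

(* first coordinate (used only as the seed of the iterated max/min;
   irrelevant for m >= 1 since max/min are idempotent), 0 if m = 0 *)
Definition vfirst (m : nat) (g : 'rV[R]_m) : R :=
  head 0 [seq g 0 i | i <- enum 'I_m].

Definition vmax (m : nat) (g : 'rV[R]_m) : R :=
  \big[Num.max/vfirst g]_(i < m) g 0 i.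
Definition vmin (m : nat) (g : 'rV[R]_m) : R :=
  \big[Num.min/vfirst g]_(i < m) g 0 i.

Definition vdot (m : nat) (g l : 'rV[R]_m) : R := \sum_(i < m) g 0 i * l 0 i.
Definition norm1 (m : nat) (l : 'rV[R]_m) : R := \sum_(i < m) `|l 0 i|.

Definition That (phi0 phi1 : R) (m : nat) (g : 'rV[R]_m) : R :=
  phi0 * (vmax g - vmin g) ^+ 2 + phi1 * (vmax g - vmin g).

Definition convex_fun (m : nat) (f : 'rV[R]_m -> R) : Prop :=
  forall (g h : 'rV[R]_m) (t : R), 0 <= t -> t <= 1 ->
    f (t *: g + (1 - t) *: h) <= t * f g + (1 - t) * f h.

Definition conj_fun (m : nat) (f : 'rV[R]_m -> R) (l : 'rV[R]_m) : \bar R :=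
  ereal_sup (range (fun g : 'rV[R]_m => ((vdot g l) - f g)%:E)).

Definition conj_efun (m : nat) (f : 'rV[R]_m -> \bar R) (g : 'rV[R]_m) : \bar R :=
  ereal_sup (range (fun l : 'rV[R]_m => ((vdot g l)%:E - f l)%E)).

Definition s_fun (phi0 phi1 : R) (x : R) : R :=
  if phi1 <= x then (x - phi1) ^+ 2 / (4 * phi0) else 0.

End Defs.

From HB Require Import structures.
From mathcomp Require Import all_boot all_order all_algebra.
From mathcomp Require Import all_classical all_reals all_analysis.
From mathcomp Require Import ring lra.
Import Order.TTheory GRing.Theory Num.Theory.
Local Open Scope ring_scope.
Set Implicit Arguments. Unset Strict Implicit.

(* Writing D(g) = max(g) - min(g), the function T = phi0 D^2 + phi1 D is a
   nondecreasing convex function of the sublinear spread D, hence convex.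
   When sum l = 0, g . l = sum_c (g_c - min g) l_c <= D(g) |l|_1 / 2, and this
   is attained by g = d on {l >= 0}, g = 0 elsewhere; so T*(l) is the
   one-variable conjugate sup_{d >= 0} (d x - phi0 d^2 - phi1 d) = s(x) at
   x = |l|_1 / 2.  When sum l <> 0, constant vectors (on which T vanishes)
   make g . l arbitrarily large.  Finally T** <= T always, and equality at g
   is witnessed by l = (2 phi0 D + phi1)(e_j - e_k), with g_j = max g and
   g_k = min g, which realises the equality in Fenchel-Young. *)

Section Extrema.
Variables (R : realType) (m : nat) (g : 'rV[R]_m).

Lemma vmax_ge i : g 0 i <= vmax g.
Proof. exact: le_bigmax. Qed.

Lemma vmin_le i : vmin g <= g 0 i.
Proof. exact: bigmin_le. Qed.

Hypothesis hm : (0 < m)%N.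

Lemma vfirst_entry : exists j, vfirst g = g 0 j.
Proof. by case: m hm g => // n _ h; exists ord0; rewrite /vfirst enum_ordSl. Qed.

Lemma vmax_le (c : R) : (forall i, g 0 i <= c) -> vmax g <= c.
Proof.
by move=> gc; have [j gj] := vfirst_entry; apply: bigmax_le => //; rewrite gj.
Qed.

Lemma vmin_ge (c : R) : (forall i, c <= g 0 i) -> c <= vmin g.
Proof.
by move=> cg; have [j gj] := vfirst_entry; apply: le_bigmin => //; rewrite gj.
Qed.

Lemma vmax_attained : exists j, vmax g = g 0 j.
Proof.
have [j0 _] := vfirst_entry.
case: (@arg_maxP _ _ _ j0 predT (fun i => g 0 i)) => // j _ gj.
by exists j; apply/eqP; rewrite eq_le vmax_ge andbT; apply: vmax_le => i; apply: gj.
Qed.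

Lemma vmin_attained : exists k, vmin g = g 0 k.
Proof.
have [j0 _] := vfirst_entry.
case: (@arg_minP _ _ _ j0 predT (fun i => g 0 i)) => // k _ gk.
by exists k; apply/eqP; rewrite eq_le vmin_le /=; apply: vmin_ge => i; apply: gk.
Qed.

Lemma vmin_le_vmax : vmin g <= vmax g.
Proof. by have [j ->] := vmax_attained; apply: vmin_le. Qed.

End Extrema.

Definition spread (R : realType) (m : nat) (g : 'rV[R]_m) : R := vmax g - vmin g.

Section Spread.
Variables (R : realType) (m : nat).
Implicit Types g h l : 'rV[R]_m.

Lemma spread_ge0 g : (0 < m)%N -> 0 <= spread g.
Proof. by move=> hm; rewrite subr_ge0 vmin_le_vmax. Qed.

Lemma spread_le_bound g (d : R) : (0 < m)%N ->
  (forall i, 0 <= g 0 i <= d) -> spread g <= d.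
Proof.
move=> hm gd; have := vmax_le hm (fun i => proj2 (andP (gd i))).
by have := vmin_ge hm (fun i => proj1 (andP (gd i))); rewrite /spread; lra.
Qed.

Lemma spread_const (c : R) : (0 < m)%N -> spread (const_mx c : 'rV[R]_m) = 0.
Proof.
move=> hm; apply/eqP; rewrite subr_eq0 eq_le vmin_le_vmax // andbT.
by apply: (@le_trans _ _ c); [apply: vmax_le | apply: vmin_ge] => // i; rewrite mxE.
Qed.

Lemma spread_convex g h (t : R) : (0 < m)%N -> 0 <= t <= 1 ->
  spread (t *: g + (1 - t) *: h) <= t * spread g + (1 - t) * spread h.
Proof.
move=> hm /andP [t0 t1]; rewrite /spread.
have hmax : vmax (t *: g + (1 - t) *: h) <= t * vmax g + (1 - t) * vmax h.
  apply: vmax_le => // i; rewrite !mxE.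
  by have := vmax_ge g i; have := vmax_ge h i; nra.
have hmin : t * vmin g + (1 - t) * vmin h <= vmin (t *: g + (1 - t) *: h).
  apply: vmin_ge => // i; rewrite !mxE.
  by have := vmin_le g i; have := vmin_le h i; nra.
lra.
Qed.

(* The pairing of g with a zero-sum l only sees g - min g, which lies in [0, D(g)]. *)
Lemma vdot_le_spread_norm1 g l : \sum_(i < m) l 0 i = 0 ->
  vdot g l <= spread g * (norm1 l / 2).
Proof.
move=> l0.
have -> : vdot g l = \sum_(i < m) (g 0 i - vmin g) * l 0 i.
  rewrite /vdot; under [RHS]eq_bigr do rewrite mulrBl.
  by rewrite sumrB -mulr_sumr l0 mulr0 subr0.
have -> : spread g * (norm1 l / 2) =
    \sum_(i < m) spread g * ((`|l 0 i| + l 0 i) / 2).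
  by rewrite -mulr_sumr -mulr_suml big_split /= l0 addr0.
apply: ler_sum => i _; have := vmin_le g i; have := vmax_ge g i; rewrite /spread.
case: (lerP 0 (l 0 i)) => [li0 | li0]; [rewrite ger0_norm | rewrite ltr0_norm] => //.
  have -> : (l 0 i + l 0 i) / 2 = l 0 i by field.
  nra.
by rewrite addNr mul0r mulr0; nra.
Qed.

End Spread.

Section Dipole.
Variables (R : realType) (m : nat) (j k : 'I_m).
Hypothesis jk : j != k.

Definition dipole (x : R) : 'rV[R]_m := \row_i (x * ((i == j)%:R - (i == k)%:R)).

Lemma sum_supported2 (F : 'I_m -> R) :
  (forall i, i != j -> i != k -> F i = 0) -> \sum_(i < m) F i = F j + F k.
Proof.
move=> F0; rewrite (bigD1 j) //= (bigD1 k) 1?eq_sym //=.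
by rewrite big1 ?addr0 // => i /andP [ij ik]; apply: F0.
Qed.

Lemma dipoleE x : [/\ dipole x 0 j = x, dipole x 0 k = - x &
  forall i, i != j -> i != k -> dipole x 0 i = 0].
Proof.
split=> [| | i ij ik]; rewrite mxE ?eqxx.
- by rewrite (negbTE jk) subr0 mulr1.
- by rewrite eq_sym (negbTE jk) sub0r mulrN1.
- by rewrite (negbTE ij) (negbTE ik) subrr mulr0.
Qed.

Lemma sum_dipole x : \sum_(i < m) dipole x 0 i = 0.
Proof. by have [xj xk x0] := dipoleE x; rewrite sum_supported2 // xj xk subrr. Qed.

Lemma norm1_dipole x : 0 <= x -> norm1 (dipole x) = x *+ 2.
Proof.
have [xj xk x0] := dipoleE x; move=> x_ge0.
rewrite /norm1 (@sum_supported2 (fun i => `|dipole x 0 i|)) => [| i ij ik].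
  by rewrite xj xk normrN ger0_norm.
by rewrite x0 ?normr0.
Qed.

Lemma vdot_dipole (g : 'rV[R]_m) x : vdot g (dipole x) = x * (g 0 j - g 0 k).
Proof.
have [xj xk x0] := dipoleE x.
rewrite /vdot (@sum_supported2 (fun i => g 0 i * dipole x 0 i)) => [| i ij ik].
  by rewrite xj xk; ring.
by rewrite x0 ?mulr0.
Qed.

End Dipole.

Section ConjugateBounds.
Variables (R : realType) (m : nat) (f : 'rV[R]_m -> R).

Lemma conj_fun_ge g l : ((vdot g l - f g)%:E <= conj_fun f l)%E.
Proof. by apply: ereal_sup_ubound; exists g. Qed.

Lemma conj_fun_le l c : (forall g, vdot g l - f g <= c) -> (conj_fun f l <= c%:E)%E.
Proof. by move=> fc; apply: ge_ereal_sup => _ [g _ <-]; rewrite lee_fin. Qed.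

Lemma conj_fun_pinfty l : (forall M, exists g, M < vdot g l - f g) ->
  conj_fun f l = +oo%E.
Proof.
move=> unbounded.
have sup_gt M : (M%:E < conj_fun f l)%E.
  have [g Mg] := unbounded M.
  by apply: lt_le_trans (conj_fun_ge g l); rewrite lte_fin.
case E: (conj_fun f l) sup_gt => [r | | ] sup_gt //.
  by have := sup_gt r; rewrite ltxx.
by have := sup_gt 0; rewrite ltNge leNye.
Qed.

Lemma conj_efun_ge (h : 'rV[R]_m -> \bar R) g l :
  ((vdot g l)%:E - h l <= conj_efun h g)%E.
Proof. by apply: ereal_sup_ubound; exists l. Qed.

Lemma biconj_le g : (conj_efun (conj_fun f) g <= (f g)%:E)%E.
Proof.
apply: ge_ereal_sup => _ [l _ <-]; have := conj_fun_ge g l.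
case: (conj_fun f l) => [r | | ] young.
- by rewrite -EFinB lee_fin; move: young; rewrite lee_fin; lra.
- by rewrite addeNy leNye.
- by move: young; rewrite leeNy_eq.
Qed.

End ConjugateBounds.

Section ScalarConjugate.
Variables (R : realType) (phi0 phi1 : R).

Lemma quad_le_homo (a d : R) : 0 <= phi0 -> 0 <= phi1 -> 0 <= a <= d ->
  phi0 * a ^+ 2 + phi1 * a <= phi0 * d ^+ 2 + phi1 * d.
Proof.
move=> phi0_ge0 phi1_ge0 /andP [a0 ad].
have : 0 <= phi0 * ((d - a) * (d + a)) by apply: mulr_ge0 => //; apply: mulr_ge0; lra.
have : 0 <= phi1 * (d - a) by apply: mulr_ge0; lra.
have -> : phi0 * ((d - a) * (d + a)) = phi0 * d ^+ 2 - phi0 * a ^+ 2 by ring.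
by move=> *; lra.
Qed.

Lemma quad_convex (a b t : R) : 0 <= phi0 -> 0 <= t <= 1 ->
  phi0 * (t * a + (1 - t) * b) ^+ 2 + phi1 * (t * a + (1 - t) * b) <=
  t * (phi0 * a ^+ 2 + phi1 * a) + (1 - t) * (phi0 * b ^+ 2 + phi1 * b).
Proof.
move=> phi0_ge0 /andP [t0 t1].
have gap : 0 <= phi0 * (t * (1 - t) * (a - b) ^+ 2).
  by apply: mulr_ge0 => //; apply: mulr_ge0; [nra | apply: sqr_ge0].
suff -> : t * (phi0 * a ^+ 2 + phi1 * a) + (1 - t) * (phi0 * b ^+ 2 + phi1 * b) =
  phi0 * (t * a + (1 - t) * b) ^+ 2 + phi1 * (t * a + (1 - t) * b) +
  phi0 * (t * (1 - t) * (a - b) ^+ 2) by lra.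
by ring.
Qed.

Lemma s_fun_ge (d x : R) : 0 < phi0 -> 0 <= d ->
  d * x - (phi0 * d ^+ 2 + phi1 * d) <= s_fun phi0 phi1 x.
Proof.
move=> phi0_gt0 d0; rewrite /s_fun; case: ifPn => [_ | ]; last by rewrite -ltNge; nra.
have phi0_neq0 : phi0 != 0 by rewrite gt_eqF.
have -> : (x - phi1) ^+ 2 / (4 * phi0) = d * x - (phi0 * d ^+ 2 + phi1 * d) +
    (x - phi1 - 2 * phi0 * d) ^+ 2 / (4 * phi0) by field.
by rewrite lerDl; apply: divr_ge0; [apply: sqr_ge0 | lra].
Qed.

Lemma s_fun_attained (x : R) : 0 < phi0 -> exists2 d : R, 0 <= d &
  d * x - (phi0 * d ^+ 2 + phi1 * d) = s_fun phi0 phi1 x.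
Proof.
move=> phi0_gt0; rewrite /s_fun.
case: ifPn => [x_ge | _]; last by exists 0 => //; ring.
have phi0_neq0 : phi0 != 0 by rewrite gt_eqF.
by exists ((x - phi1) / (2 * phi0)); [apply: divr_ge0; lra | field].
Qed.

Lemma s_fun0 : 0 <= phi1 -> s_fun phi0 phi1 0 = 0.
Proof.
rewrite /s_fun => phi1_ge0; case: ifPn => // phi1_le0.
have -> : phi1 = 0 by lra.
by rewrite subrr expr0n mul0r.
Qed.

(* the slope x = 2 phi0 d + phi1 of the quadratic at d is where Fenchel-Young is tight *)
Lemma s_fun_tangent (d : R) : 0 < phi0 -> 0 <= d ->
  (2 * phi0 * d + phi1) * d - s_fun phi0 phi1 (2 * phi0 * d + phi1) =
  phi0 * d ^+ 2 + phi1 * d.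
Proof.
move=> phi0_gt0 d0; have phi0_neq0 : phi0 != 0 by rewrite gt_eqF.
rewrite /s_fun ifT; first by field.
by rewrite lerDr !mulr_ge0 // ltW.
Qed.

End ScalarConjugate.

Section That.
Variables (R : realType) (m : nat) (phi0 phi1 : R).
Hypotheses (hm : (0 < m)%N) (hphi0 : 0 < phi0) (hphi1 : 0 <= phi1).
Local Notation T := (@That R phi0 phi1 m).
Implicit Types g l : 'rV[R]_m.

Lemma ThatE g : T g = phi0 * spread g ^+ 2 + phi1 * spread g.
Proof. by []. Qed.

Lemma That_convex : convex_fun T.
Proof.
move=> g h t t0 t1; have t01 : 0 <= t <= 1 by rewrite t0.
rewrite !ThatE; apply: le_trans (quad_convex phi1 _ _ (ltW hphi0) t01).
apply: quad_le_homo; [exact: ltW | by [] | ].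
by rewrite spread_ge0 ?spread_convex.
Qed.

Lemma conj_That_sum_eq0 l : \sum_(i < m) l 0 i = 0 ->
  conj_fun T l = (s_fun phi0 phi1 (norm1 l / 2))%:E.
Proof.
move=> l0; apply/eqP; rewrite eq_le; apply/andP; split.
  apply: conj_fun_le => g; have := vdot_le_spread_norm1 g l0.
  have := s_fun_ge phi1 (norm1 l / 2) hphi0 (spread_ge0 g hm).
  by rewrite ThatE; lra.
have [d d0 <-] := s_fun_attained phi1 (norm1 l / 2) hphi0.
pose g := \row_(i < m) (if 0 <= l 0 i then d else 0).
apply: le_trans (conj_fun_ge T g l); rewrite lee_fin.
have g_bound i : 0 <= g 0 i <= d by rewrite mxE; case: ifP; lra.
have spread_g : 0 <= spread g <= d by rewrite spread_ge0 ?spread_le_bound.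
have := quad_le_homo (ltW hphi0) hphi1 spread_g.
suff -> : vdot g l = d * (norm1 l / 2) by rewrite ThatE; lra.
rewrite /vdot /norm1.
have -> : \sum_(i < m) `|l 0 i| = \sum_(i < m) (`|l 0 i| + l 0 i).
  by rewrite big_split /= l0 addr0.
rewrite mulr_suml mulr_sumr; apply: eq_bigr => i _; rewrite mxE.
by case: (lerP 0 (l 0 i)) => li0; [rewrite ger0_norm // | rewrite ltr0_norm //]; field.
Qed.

Lemma conj_That_sum_neq0 l : \sum_(i < m) l 0 i != 0 -> conj_fun T l = +oo%E.
Proof.
move=> l0; apply: conj_fun_pinfty => M.
exists (const_mx ((M + 1) / \sum_(i < m) l 0 i)).
rewrite ThatE spread_const // expr0n /= !mulr0 addr0 subr0.
have -> : vdot (const_mx ((M + 1) / \sum_(i < m) l 0 i)) l = M + 1.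
  by rewrite /vdot; under eq_bigr do rewrite mxE; rewrite -mulr_sumr divfK.
lra.
Qed.

Lemma That_le_biconj g : ((T g)%:E <= conj_efun (conj_fun T) g)%E.
Proof.
have [j gj] := vmax_attained g hm; have [k gk] := vmin_attained g hm.
have T_dual : exists2 l : 'rV[R]_m, \sum_(i < m) l 0 i = 0 &
    vdot g l - s_fun phi0 phi1 (norm1 l / 2) = T g.
  have [jk_eq | jk] := eqVneq j k.
    exists 0; first by rewrite big1 // => i _; rewrite mxE.
    rewrite /vdot /norm1 !big1 => [| i _ | i _]; rewrite ?mxE ?normr0 ?mulr0 //.
    by rewrite mul0r s_fun0 // ThatE /spread gj gk jk_eq !subrr expr0n /= !mulr0 addr0.
  pose x := 2 * phi0 * spread g + phi1.
  have x0 : 0 <= x by rewrite addr_ge0 // !mulr_ge0 ?spread_ge0 // ltW.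
  exists (dipole j k x); first exact: sum_dipole.
  rewrite norm1_dipole // vdot_dipole // -gj -gk.
  have -> : x *+ 2 / 2 = x by rewrite -mulr_natr mulfK.
  by rewrite s_fun_tangent ?spread_ge0.
have [l l0 <-] := T_dual; apply: le_trans (conj_efun_ge _ g l).
by rewrite conj_That_sum_eq0 // EFinB.
Qed.

End That.

Unset Implicit Arguments.

Theorem mainTheorem1 (R : realType) (m : nat) (phi0 phi1 : R)
  (hm : (0 < m)%N) (hphi0 : 0 < phi0) (hphi1 : 0 <= phi1) :
  convex_fun (@That R phi0 phi1 m) /\
  (forall l : 'rV[R]_m,
     conj_fun (@That R phi0 phi1 m) l =
     (if \sum_(i < m) l 0 i == 0
      then (s_fun phi0 phi1 (norm1 l / 2))%:E
      else +oo%E)) /\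
  (forall g : 'rV[R]_m,
     (That phi0 phi1 g)%:E = conj_efun (conj_fun (@That R phi0 phi1 m)) g).
Proof.
split; first exact: That_convex.
split => [l | g].
  case: eqP => [l0 | /eqP l0]; first exact: conj_That_sum_eq0.
  exact: conj_That_sum_neq0.
by apply/eqP; rewrite eq_le That_le_biconj // biconj_le.
Qed.
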